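(* Consider the closed-loop scalar system $\dot X(t)=aX(t)+bU(t)$ with $a>0$, $b\ne0$, and the open-loop system $\dot X(t)=aX(t)$, both with random initial state $X(0)$, $h(X(0))<\infty$, $|X(0)|<L$ ($L$ known to sensor and controller), with the sensor communicating over the timing channel described in the context. If there exists an estimator such that in open loop $|X(t)-\hat X(t)|\to0$ in probability as $t\to\infty$, then there exists a controller such that in closed loop $|X(t)|\to0$ in probability as $t\to\infty$.
   Context: Timing channel: symbols from a one-element alphabet; initialized with a symbol received at time $0$; after the acknowledgment of the $i$-th reception the sender waits $W_{i+1}\ge0$ and transmits the next symbol, received after an i.i.d. random delay $S_{i+1}\ge0$; $D_i=W_i+S_i$. The sensor knows $X(0)$, $L$ and the dynamics and encodes into the waiting times (random i.i.d. codebook independent of delays; acknowledgments used only to avoid queuing). The controller (resp. estimator) at time $t$ computes $U(t)$ (resp. $\hat X(t)$) from the inter-reception times of all symbols received by time $t$, $L$, the dynamics (and, for the controller, its own past inputs). Control inputs are applied with infinite precision and zero delay. *)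

From HB Require Import structures.
From mathcomp Require Import all_boot all_order all_algebra.
From mathcomp Require Import all_classical all_reals all_analysis.
Set Implicit Arguments. Unset Strict Implicit. Unset Printing Implicit Defensive.
Import Order.TTheory GRing.Theory Num.Theory.
Import numFieldNormedType.Exports.
Local Open Scope classical_set_scope.
Local Open Scope ring_scope.

Section TimingChannel.
Context {R : realType} {d : measure_display} {T : measurableType d}
        {dC : measure_display} {CT : measurableType dC}.

Definition has_density (P : probability T R) (X0 : T -> R) (f : R -> R) :=
  [/\ forall x, 0 <= f x, measurable_fun setT f &
      forall A, measurable A ->
        P (X0 @^-1` A) = (\int[lebesgue_measure]_(x in A) (f x)%:E)%E].

Definition finite_diff_entropy (P : probability T R) (X0 : T -> R) :=
  exists f, has_density P X0 f /\
    (lebesgue_measure).-integrable setT (fun x => (f x * ln (f x))%:E).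

(* X0, the codebook randomness C and the delays S_1, S_2, ... (S i is the
   delay of symbol i+1) are mutually independent. *)
Definition mutually_indep (P : probability T R) (X0 : T -> R) (C : T -> CT)
    (S : nat -> T -> R) :=
  forall (n : nat) (A : set R) (B : set CT) (E : nat -> set R),
    measurable A -> measurable B -> (forall i, measurable (E i)) ->
    P (X0 @^-1` A `&` C @^-1` B `&` \bigcap_(i in `I_n) (S i @^-1` E i)) =
    (P (X0 @^-1` A) * P (C @^-1` B) * \prod_(i < n) P (S i @^-1` E i))%E.

Definition ident_distr (P : probability T R) (S : nat -> T -> R) :=
  forall i (A : set R), measurable A -> P (S i @^-1` A) = P (S 0 @^-1` A).

(* Waiting time W_{i+1} = enc i (X0 w) (C w); inter-reception time
   D_{i+1} = W_{i+1} + S_{i+1}. *)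
Definition inter_time (enc : nat -> R -> CT -> R) (X0 : T -> R) (C : T -> CT)
    (S : nat -> T -> R) (i : nat) (w : T) : R :=
  enc i (X0 w) (C w) + S i w.

(* reception time of symbol n (symbol 0 received at time 0) *)
Definition recv_time enc X0 C S (n : nat) (w : T) : R :=
  \sum_(i < n) inter_time enc X0 C S i w.

(* Information available at the receiver at time t: for each i, the
   inter-reception time D_{i+1} if symbol i+1 has been received by time t,
   and None otherwise. *)
Definition observation enc X0 C S (t : R) (w : T) : nat -> option R :=
  fun i => if recv_time enc X0 C S i.+1 w <= t
           then Some (inter_time enc X0 C S i w) else None.

Definition ol_state (a : R) (X0 : T -> R) (t : R) (w : T) : R :=
  expR (a * t) * X0 w.

Definition estimate (est : R -> CT -> (nat -> option R) -> R)
    enc X0 C S (t : R) (w : T) : R :=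
  est t (C w) (observation enc X0 C S t w).

Definition control (ctrl : R -> CT -> (nat -> option R) -> R)
    enc X0 C S (t : R) (w : T) : R :=
  ctrl t (C w) (observation enc X0 C S t w).

Definition admissible_input (U : R -> T -> R) :=
  forall w t, 0 <= t ->
    (lebesgue_measure).-integrable `[0, t] (fun s => (U s w)%:E).

(* Closed-loop solution of dX = aX + bU (variation of constants). *)
Definition cl_state (a b : R) (X0 : T -> R) (U : R -> T -> R)
    (t : R) (w : T) : R :=
  expR (a * t) * X0 w +
  Rintegral lebesgue_measure `[0, t] (fun s => expR (a * (t - s)) * (b * U s w)).

Definition cvg_in_prob_to0 (P : probability T R) (Y : R -> T -> R) :=
  (forall t, 0 <= t -> measurable_fun setT (Y t)) /\
  forall eps : R, 0 < eps ->
    (fun t => P [set w | eps <= `|Y t w|]) @ +oo --> 0%E.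

End TimingChannel.

(* A good open-loop estimate X^(k) of X(k) = e^{ak} X(0) gives the receiver
   the estimate V_k = e^{-ak} X^(k) of X(0), whose error multiplied by e^{ak}
   is the open-loop estimation error at time k.  On ]n, n+1] the controller
   applies U(s) = e^{as} (V_{n-1} - V_n) / b (with V_{-1} = 0), which only uses
   symbols received by time n.  By variation of constants the closed-loop state
   at t = n + u, u in [0, 1], is e^{at} (X(0) - (1 - u) V_{n-1} - u V_n): a
   convex combination of the open-loop errors at times n - 1 and n, each
   multiplied by a factor at most e^{2a}, hence it tends to 0 in probability.  The
   construction is pathwise: apart from the measurability of X(0), the only
   hypotheses used are that waiting times and delays are nonnegative, which
   makes reception times increasing. *)

From HB Require Import structures.
From mathcomp Require Import all_boot all_order all_algebra.
From mathcomp Require Import all_classical all_reals all_analysis.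
From mathcomp Require Import measurable_realfun ring lra.
Set Implicit Arguments. Unset Strict Implicit. Unset Printing Implicit Defensive.
Import Order.TTheory GRing.Theory Num.Theory.
Import numFieldNormedType.Exports.
Local Open Scope classical_set_scope.
Local Open Scope ring_scope.

Lemma integrable_setU d (T : measurableType d) (R : realType)
    (mu : {measure set T -> \bar R}) (A B : set T) (f : T -> \bar R) :
  measurable A -> measurable B -> mu.-integrable A f -> mu.-integrable B f ->
  mu.-integrable (A `|` B) f.
Proof.
move=> mA mB /integrableP[mfA iA] /integrableP[mfB iB].
have mBA : measurable (B `\` A) by exact: measurableD.
have mfBA := measurable_funS mB (@subDsetl _ B A) mfB.
apply/integrableP; split; first exact/measurable_funU.
have -> : A `|` B = A `|` (B `\` A) by rewrite setUDr setDv setD0.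
rewrite ge0_integral_setU //; last 2 first.
- apply: measurableT_comp => //; exact/measurable_funU.
- by apply/disj_setPS => x [? []].
apply: lte_add_pinfty => //; apply: le_lt_trans iB.
by apply: ge0_subset_integral => //; exact: measurableT_comp.
Qed.

Lemma measurable_normr_ge d (T : measurableType d) (R : realType) (Y : T -> R)
    (e : R) :
  measurable_fun setT Y -> measurable [set w | e <= `|Y w|].
Proof.
move=> mY; have mN : measurable_fun setT (fun w => `|Y w|).
  exact: measurableT_comp.
have := mN measurableT `[e, +oo[%classic (measurable_itv _).
rewrite setTI; congr measurable; apply/seteqP.
by split => w /=; rewrite in_itv /= andbT.
Qed.

Lemma normr_convex_le {R : realDomainType} (u x y : R) : 0 <= u <= 1 ->
  `|(1 - u) * x + u * y| <= `|x| + `|y|.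
Proof.
move=> /andP[u0 u1]; apply: le_trans (ler_normD _ _) _.
rewrite !normrM (ger0_norm u0) ger0_norm ?subr_ge0 //.
by apply: lerD; apply: ler_piMl; rewrite ?normr_ge0 //; lra.
Qed.

Section truncn.
Context {R : realType}.

Lemma truncn_itvW (t : R) : 0 <= t ->
  (Num.truncn t)%:R <= t <= (Num.truncn t).+1%:R.
Proof. by move=> /truncn_itv /andP[-> /ltW ->]. Qed.

Lemma truncn_pred_cvgy : ((Num.truncn (t : R)).-1%:R : R) @[t --> +oo] --> +oo.
Proof.
apply/cvgryPge => A; near=> t.
have t1 : 1 <= t by near: t; apply: nbhs_pinfty_ge; rewrite num_real.
have A2 : A + 2 <= t by near: t; apply: nbhs_pinfty_ge; rewrite num_real.
have /andP[_] := truncn_itv (le_trans ler01 t1).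
have : (0 < Num.truncn t)%N by rewrite truncn_gt0.
by case: (Num.truncn t) => // k _; rewrite -!natr1 /=; lra.
Unshelve. all: end_near.
Qed.

End truncn.

Section lebesgue_itv.
Context {R : realType}.
Local Notation mu := (@lebesgue_measure R).

Lemma integrable_set1 (f : R -> \bar R) (r : R) : mu.-integrable [set r] f.
Proof.
apply/integrableP; split; first exact: measurable_fun_set1.
by rewrite integral_set1 ltry.
Qed.

Lemma lebesgue_measure_itv_oc (x y : R) : x <= y -> mu `]x, y] = (y - x)%:E.
Proof.
move=> xy; rewrite lebesgue_measure_itv /= lte_fin.
by case: ltgtP xy => // -> _; rewrite subrr.
Qed.

Lemma itv_cc_setU_oc (x y z : R) : x <= y -> y <= z ->
  `[x, z]%classic = `[x, y]%classic `|` `]y, z]%classic :> set R.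
Proof. by move=> xy yz; rewrite -itv_bndbnd_setU // bnd_simp. Qed.

Lemma integrable_itv_cc_oc (f : R -> R) (x y z : R) : x <= y -> y <= z ->
  mu.-integrable `[x, y] (EFin \o f) -> mu.-integrable `]y, z] (EFin \o f) ->
  mu.-integrable `[x, z] (EFin \o f).
Proof.
by move=> xy yz ixy iyz; rewrite (itv_cc_setU_oc xy yz); exact: integrable_setU.
Qed.

Lemma Rintegral_itv_cc_oc (f : R -> R) (x y z : R) : x <= y -> y <= z ->
  mu.-integrable `[x, z] (EFin \o f) ->
  \int[mu]_(s in `[x, z]) f s =
  \int[mu]_(s in `[x, y]) f s + \int[mu]_(s in `]y, z]) f s.
Proof.
move=> xy yz; rewrite (itv_cc_setU_oc xy yz) => ixz; rewrite Rintegral_setU //.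
apply/disj_setPS => s [/=]; rewrite !in_itv /= => /andP[_ sy] /andP[ys _].
by move: (lt_le_trans ys sy); rewrite ltxx.
Qed.

End lebesgue_itv.

Section stair.
Context {R : realType}.
Local Notation mu := (@lebesgue_measure R).
Variable V : int -> R.

Definition stair (s : R) : R := V (Num.ceil s - 2) - V (Num.ceil s - 1).

Lemma stair_itv_oc (n : nat) (s : R) : n%:R < s <= n.+1%:R ->
  stair s = V (n%:Z - 1) - V n%:Z.
Proof.
move=> /andP[ns sn].
have n1 : n.+1%:Z - 1 = n%:Z by rewrite -addn1 PoszD addrK.
have n2 : n.+1%:Z - 2 = n%:Z - 1.
  by rewrite -addn1 PoszD -addrA; congr (_ + _).
by rewrite /stair (@ceil_def _ s n.+1%:Z) ?n1 ?n2 // -!pmulrn ns.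
Qed.

Lemma integrable_stair_itv_oc (n : nat) (t : R) : n%:R <= t <= n.+1%:R ->
  mu.-integrable `]n%:R, t] (EFin \o stair).
Proof.
move=> /andP[nt tn]; set c := V (n%:Z - 1) - V n%:Z.
apply: (@eq_integrable _ _ _ mu _ _ (EFin \o cst c)) => //.
  move=> s /set_mem; rewrite /= in_itv /= => /andP[ns st].
  by rewrite (@stair_itv_oc n) // ns (le_trans st).
apply: measurable_bounded_integrable => //; last exact: bounded_cst.
by have := ltry (t - n%:R); rewrite -lebesgue_measure_itv_oc.
Qed.

Lemma Rintegral_stair_itv_oc (n : nat) (t : R) : n%:R <= t <= n.+1%:R ->
  \int[mu]_(s in `]n%:R, t]) stair s = (t - n%:R) * (V (n%:Z - 1) - V n%:Z).
Proof.
move=> /andP[nt tn].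
rewrite (@eq_Rintegral _ _ _ _ _ (fun=> V (n%:Z - 1) - V n%:Z)); last first.
  move=> s /set_mem; rewrite /= in_itv /= => /andP[ns st].
  by rewrite (@stair_itv_oc n) // ns (le_trans st).
rewrite Rintegral_cst // mulrC; congr (_ * _).
by have /= := congr1 fine (lebesgue_measure_itv_oc nt).
Qed.

Lemma integrable_Rintegral_stair (n : nat) (t : R) : n%:R <= t <= n.+1%:R ->
  mu.-integrable `[0, t] (EFin \o stair) /\
  \int[mu]_(s in `[0, t]) stair s =
    V (-1) - V (n%:Z - 1) + (t - n%:R) * (V (n%:Z - 1) - V n%:Z).
Proof.
elim: n t => [|n IH] t /[dup] ntn /andP[nt tn].
  have i00 : mu.-integrable `[0, 0] (EFin \o stair).
    by rewrite set_itv1; exact: integrable_set1.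
  have i0t := integrable_itv_cc_oc (lexx 0) nt i00
    (integrable_stair_itv_oc ntn).
  split => //; rewrite (Rintegral_itv_cc_oc (lexx 0) nt) //.
  have := Rintegral_stair_itv_oc ntn; rewrite mulr0n => ->.
  by rewrite set_itv1 Rintegral_set1 subrr add0r.
have n0 : 0 <= n.+1%:R :> R by [].
have [|i0n v0n] := IH n.+1%:R; first by rewrite ler_nat leqnSn /=.
have i0t := integrable_itv_cc_oc n0 nt i0n (integrable_stair_itv_oc ntn).
split => //.
rewrite (Rintegral_itv_cc_oc n0 nt) // v0n Rintegral_stair_itv_oc //.
have -> : n.+1%:Z - 1 = n by rewrite -addn1 PoszD addrK.
rewrite -natr1; ring.
Qed.

End stair.

Definition stair_input {R : realType} {T : Type} (a b : R) (V : T -> int -> R)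
    (s : R) (w : T) : R :=
  expR (a * s) / b * stair (V w) s.

Section stair_input.
Context {R : realType} {d : measure_display} {T : measurableType d}.
Variables (a b : R) (X0 : T -> R) (V : T -> int -> R).
Local Notation mu := (@lebesgue_measure R).

Lemma bounded_expR_itv (t : R) :
  [bounded expR (a * s) / b | s in `[0, t]%classic].
Proof.
rewrite /bounded_near; near=> M => s /=; rewrite in_itv /= => /andP[s0 st].
apply: (@le_trans _ _ (expR (`|a| * t) / `|b|)).
  rewrite normrM normfV ger0_norm ?expR_ge0 // ler_wpM2r ?invr_ge0 // ler_expR.
  by rewrite (le_trans (ler_norm _)) // normrM (ger0_norm s0) ler_wpM2l.
by near: M; apply: nbhs_pinfty_ge; rewrite num_real.
Unshelve. all: end_near.
Qed.

Lemma admissible_stair_input : admissible_input (stair_input a b V).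
Proof.
move=> w t t0.
have [istair _] := integrable_Rintegral_stair (V w) (truncn_itvW t0).
suff : mu.-integrable `[0, t]
    ((EFin \o stair (V w)) \* (EFin \o (fun s => (expR (a * s) / b)%R)))%E.
  by apply: eq_integrable => // s _ /=; rewrite -EFinM mulrC.
apply: integrableMl => //; last exact: bounded_expR_itv.
apply: measurable_funM => //.
exact: (@measurableT_comp _ _ _ _ _ _ expR _ ( *%R a)).
Qed.

Lemma cl_state_stair_input (n : nat) t w : b != 0 -> n%:R <= t <= n.+1%:R ->
  cl_state a b X0 (stair_input a b V) t w =
  expR (a * t) * (X0 w + (V w (-1) - V w (n%:Z - 1) +
                          (t - n%:R) * (V w (n%:Z - 1) - V w n%:Z))).
Proof.
move=> b0 ntn; have [istair <-] := integrable_Rintegral_stair (V w) ntn.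
rewrite /cl_state mulrDr -RintegralZl //; congr (_ + _).
apply: eq_Rintegral => s _; rewrite /stair_input.
have -> : a * t = a * (t - s) + a * s by rewrite -mulrDr subrK.
by rewrite expRD; field.
Qed.

Lemma measurable_cl_state_stair_input t : b != 0 -> 0 <= t ->
  measurable_fun setT X0 -> (forall k, measurable_fun setT (V ^~ k)) ->
  measurable_fun setT (cl_state a b X0 (stair_input a b V) t).
Proof.
move=> b0 t0 mX0 mV.
rewrite (funext (fun w => cl_state_stair_input w b0 (truncn_itvW t0))).
apply: measurable_funM => //; apply: measurable_funD => //.
apply: measurable_funD; last apply: measurable_funM => //.
all: exact: measurable_funB.
Qed.

End stair_input.

Definition x0_estimates {R : realType} (a : R) (E : R -> R) (k : int) : R :=
  if k < 0 then 0 else expR (- (a * k%:~R)) * E k%:~R.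

Section x0_estimates.
Context {R : realType} {d : measure_display} {T : measurableType d}.
Variables (a b : R) (X0 : T -> R) (E : T -> R -> R).

Lemma measurable_x0_estimates k :
  (forall r, 0 <= r -> measurable_fun setT (E ^~ r)) ->
  measurable_fun setT (fun w => x0_estimates a (E w) k).
Proof.
move=> mE; rewrite /x0_estimates.
have [_|k0] := ltP k 0; first exact: measurable_cst.
by apply: measurable_funM => //; apply: mE; rewrite ler0z.
Qed.

Lemma cl_state_x0_estimates (m : nat) t w : b != 0 ->
  m.+1%:R <= t <= m.+2%:R ->
  cl_state a b X0 (stair_input a b (fun w => x0_estimates a (E w))) t w =
  (1 - (t - m.+1%:R)) *
    (expR (a * (t - m%:R)) * (ol_state a X0 m%:R w - E w m%:R)) +
  (t - m.+1%:R) *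
    (expR (a * (t - m.+1%:R)) * (ol_state a X0 m.+1%:R w - E w m.+1%:R)).
Proof.
move=> b0 mt; rewrite (cl_state_stair_input a X0 _ w b0 mt).
have -> : m.+1%:Z - 1 = m by rewrite -addn1 PoszD addrK.
rewrite /x0_estimates /ol_state /= !pmulrn !mulrBr !expRB !expRN.
by field; rewrite !gt_eqF ?expR_gt0.
Qed.

Lemma normr_cl_state_x0_estimates_le (m : nat) t w : 0 < a -> b != 0 ->
  m.+1%:R <= t <= m.+2%:R ->
  `|cl_state a b X0 (stair_input a b (fun w => x0_estimates a (E w))) t w| <=
  expR (a *+ 2) * (`|ol_state a X0 m%:R w - E w m%:R| +
                   `|ol_state a X0 m.+1%:R w - E w m.+1%:R|).
Proof.
move=> a0 b0 mt; rewrite (cl_state_x0_estimates w b0 mt).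
move: mt; rewrite -!natr1 => /andP[mt tm].
have u01 : 0 <= t - (m%:R + 1) <= 1 by apply/andP; split; lra.
apply: le_trans (normr_convex_le _ _ u01) _; rewrite [leRHS]mulrDr.
by apply: lerD; rewrite normrM ger0_norm ?expR_ge0 // ler_wpM2r // ler_expR
  -[a *+ 2]mulr_natr ler_pM2l //; lra.
Qed.

End x0_estimates.

(* Reception times are partial sums of the observed inter-reception times, so
   the observation at time j can be recovered from the one at any later time. *)
Definition obs_restrict {R : realType} (j : R) (o : nat -> option R) :
    nat -> option R :=
  fun i => if \sum_(k < i.+1) odflt 0 (o k) <= j then o i else None.

Section obs_restrict.
Context {R : realType} {d : measure_display} {T : measurableType d}
        {dC : measure_display} {CT : measurableType dC}.
Variables (enc : nat -> R -> CT -> R) (X0 : T -> R) (C : T -> CT)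
          (S : nat -> T -> R).
Hypothesis inter_time_ge0 : forall i w, 0 <= inter_time enc X0 C S i w.

Lemma le_recv_time (k i : nat) w : (k <= i)%N ->
  recv_time enc X0 C S k w <= recv_time enc X0 C S i w.
Proof.
move=> ki; rewrite /recv_time -(subnKC ki) big_split_ord /= lerDl.
exact: sumr_ge0.
Qed.

Lemma obs_restrict_observation (j t : R) w : j <= t ->
  obs_restrict j (observation enc X0 C S t w) = observation enc X0 C S j w.
Proof.
move=> jt; apply/funext => i; rewrite /obs_restrict.
have [it|ti] := leP (recv_time enc X0 C S i.+1 w) t.
  suff -> : \sum_(k < i.+1) odflt 0 (observation enc X0 C S t w k) =
            recv_time enc X0 C S i.+1 w by rewrite /observation it.
  apply: eq_bigr => k _; rewrite /observation ifT //.
  exact: le_trans (le_recv_time _ _) it.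
rewrite /observation (leNgt _ t) ti /= if_same ifF //.
by rewrite leNgt (le_lt_trans jt ti).
Qed.

End obs_restrict.

Definition stair_controller {R : realType} {CT : Type} (a b : R)
    (est : R -> CT -> (nat -> option R) -> R) :
    R -> CT -> (nat -> option R) -> R :=
  fun s c o => expR (a * s) / b *
    stair (x0_estimates a (fun r => est r c (obs_restrict r o))) s.

Lemma control_stair_controller {R : realType} {d : measure_display}
    {T : measurableType d} {dC : measure_display} {CT : measurableType dC}
    (a b : R) (est : R -> CT -> (nat -> option R) -> R)
    (enc : nat -> R -> CT -> R) (X0 : T -> R) (C : T -> CT)
    (S : nat -> T -> R) :
  (forall i w, 0 <= inter_time enc X0 C S i w) ->
  control (stair_controller a b est) enc X0 C S =
  stair_input a b (fun w => x0_estimates a (estimate est enc X0 C S ^~ w)).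
Proof.
move=> D0; apply/funext => s; apply/funext => w.
have le1 : (Num.ceil s - 1)%:~R <= s := ltW (ceilB1_lt s).
have le2 : (Num.ceil s - 2)%:~R <= s.
  by apply: le_trans le1; rewrite ler_int lerB // lerBlDr.
rewrite /control /stair_controller /stair_input /stair /x0_estimates /estimate.
by rewrite !obs_restrict_observation.
Qed.

Section cvg_in_prob_to0.
Context {R : realType} {d : measure_display} {T : measurableType d}.
Variable P : probability T R.

Lemma cvg_in_prob_to0_dominated (Y Z : R -> T -> R) (g1 g2 : R -> R) (K : R) :
  cvg_in_prob_to0 P Y -> (forall t, 0 <= t -> measurable_fun setT (Z t)) ->
  g1 t @[t --> +oo] --> +oo -> g2 t @[t --> +oo] --> +oo -> 0 < K ->
  (\forall t \near +oo, forall w,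
     `|Z t w| <= K * (`|Y (g1 t) w| + `|Y (g2 t) w|)) ->
  cvg_in_prob_to0 P Z.
Proof.
move=> [mY cY] mZ g1y g2y K0 ZY; split => // eps eps0.
set del := eps / (2 * K).
have del0 : 0 < del by rewrite divr_gt0 // mulr_gt0.
have delK : K * (del + del) = eps by rewrite /del; field; rewrite gt_eqF.
set F := fun r => P [set w | del <= `|Y r w|].
have Fg0 (g : R -> R) :
    g t @[t --> +oo] --> +oo -> F (g t) @[t --> +oo] --> 0%E.
  by move/cvg_comp; apply; exact: cY.
apply: (@squeeze_cvge _ _ _ _ (fun=> 0%E) _ (fun t => F (g1 t) + F (g2 t))%E);
  [|exact: cvg_cst|by rewrite -[0%E]adde0; apply: cvgeD => //; exact: Fg0].
near=> t; apply/andP; split; first exact: measure_ge0.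
have mY1 : measurable [set w | del <= `|Y (g1 t) w|].
  by apply/measurable_normr_ge/mY; near: t; exact: cvgry_ge.
have mY2 : measurable [set w | del <= `|Y (g2 t) w|].
  by apply/measurable_normr_ge/mY; near: t; exact: cvgry_ge.
have t0 : 0 <= t by near: t; apply: nbhs_pinfty_ge; rewrite num_real.
have ZYt : forall w, `|Z t w| <= K * (`|Y (g1 t) w| + `|Y (g2 t) w|).
  by near: t.
apply: le_trans (measureU2 _ mY1 mY2); apply: le_measure; rewrite ?inE.
- exact: measurable_normr_ge (mZ t t0).
- exact: measurableU.
move=> w /= Zw; have Zle := ZYt w.
have [|Y1w] := leP del `|Y (g1 t) w|; first by left.
right; rewrite leNgt; apply/negP => Y2w.
have : K * (`|Y (g1 t) w| + `|Y (g2 t) w|) < K * (del + del).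
  by rewrite ltr_pM2l // ltrD.
lra.
Unshelve. all: end_near.
Qed.

End cvg_in_prob_to0.

Theorem lemma3 (R : realType) (d : measure_display) (T : measurableType d)
    (P : probability T R) (dC : measure_display) (CT : measurableType dC)
    (a b L : R) (X0 : T -> R) (C : T -> CT) (S : nat -> T -> R)
    (enc : nat -> R -> CT -> R) :
  0 < a -> b != 0 ->
  measurable_fun setT X0 -> measurable_fun setT C ->
  (forall i, measurable_fun setT (S i)) ->
  finite_diff_entropy P X0 ->
  P [set w | `|X0 w| < L] = 1%E ->
  (forall i w, 0 <= S i w) -> ident_distr P S ->
  mutually_indep P X0 C S ->
  (forall i x c, 0 <= enc i x c) ->
  (exists est : R -> CT -> (nat -> option R) -> R,
     cvg_in_prob_to0 P
       (fun t w => ol_state a X0 t w - estimate est enc X0 C S t w)) ->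
  exists ctrl : R -> CT -> (nat -> option R) -> R,
    admissible_input (control ctrl enc X0 C S) /\
    cvg_in_prob_to0 P (cl_state a b X0 (control ctrl enc X0 C S)).
Proof.
move=> a0 b0 mX0 _ _ _ _ S0 _ _ enc0 [est [mY cY]].
have D0 i w : 0 <= inter_time enc X0 C S i w by rewrite addr_ge0.
exists (stair_controller a b est); rewrite control_stair_controller //.
split; first exact: admissible_stair_input.
set E := fun w r => estimate est enc X0 C S r w.
have mE r : 0 <= r -> measurable_fun setT (E ^~ r).
  move=> r0; rewrite (_ : E ^~ r =
    fun w => ol_state a X0 r w - (ol_state a X0 r w - E w r)).
    by apply: measurable_funB; [exact: measurable_funM|exact: mY].
  by apply/funext => w; rewrite opprB addrC subrK.
apply: (cvg_in_prob_to0_dominated (g2 := fun t => (Num.truncn t)%:R)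
  (conj mY cY) _ truncn_pred_cvgy _ (expR_gt0 (a *+ 2))).
- move=> t t0; apply: measurable_cl_state_stair_input => // k.
  exact: measurable_x0_estimates.
- by apply: ger_cvgy truncn_pred_cvgy; near=> t; rewrite ler_nat leq_pred.
near=> t => w.
have t1 : 1 <= t by near: t; apply: nbhs_pinfty_ge; rewrite num_real.
have /andP[] := truncn_itv (le_trans ler01 t1).
have : (0 < Num.truncn t)%N by rewrite truncn_gt0.
case: (Num.truncn t) => // m _ mt tm.
by apply: normr_cl_state_x0_estimates_le; rewrite // mt ltW.
Unshelve. all: end_near.
Qed.
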